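(* Two irrationals $\alpha,\beta\in(1,2)$ are $\mathrm{PSL}(2,\mathbb Z)$-equivalent (i.e. $\beta=g\alpha$ for some $g\in\mathrm{PSL}(2,\mathbb Z)$ acting by Möbius transformations) if and only if there exist integers $r,s>0$ such that $t_r(\alpha)=t_s(\beta)$. Moreover, $\alpha$ is $\mathrm{PSL}(2,\mathbb Z)$-equivalent to each of its tails $t_m(\alpha)$.
   Context: The Lehner map on $[1,2)$ is $L(x)=\frac{1}{2-x}$ for $x\in[1,3/2)$ and $L(x)=\frac{1}{x-1}$ for $x\in[3/2,2)$. For irrational $x\in(1,2)$, its Lehner digits are $(a_i,\epsilon_i)=(2,-1)$ if $L^i(x)\in[1,3/2)$ and $(1,+1)$ if $L^i(x)\in[3/2,2)$, and $x=a_0+\cfrac{\epsilon_0}{a_1+\cfrac{\epsilon_1}{a_2+\cdots}}=[\![(a_0,\epsilon_0)(a_1,\epsilon_1)\cdots]\!]$. For $\alpha=[\![(a_0,\epsilon_0)(a_1,\epsilon_1)\cdots]\!]$ the $m$-tail is $t_m(\alpha)=(-\epsilon_0)(-\epsilon_1)\cdots(-\epsilon_m)\,[\![(a_{m+1},\epsilon_{m+1})(a_{m+2},\epsilon_{m+2})\cdots]\!]$, where $[\![\cdots]\!]$ denotes the value of the continued fraction with those digits. *)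

From Stdlib Require Import Reals ZArith.
Open Scope R_scope.

(* The Lehner map on [1,2): L(x) = 1/(2-x) on [1,3/2), 1/(x-1) on [3/2,2).
   (Made total on R; only its values on (1,2) matter.) *)
Definition lehner (x : R) : R :=
  if Rlt_dec x (3/2) then / (2 - x) else / (x - 1).

Definition lehner_iter (n : nat) (x : R) : R := Nat.iter n lehner x.

Definition lehner_eps (x : R) (i : nat) : R :=
  if Rlt_dec (lehner_iter i x) (3/2) then -1 else 1.
Definition lehner_a (x : R) (i : nat) : R :=
  if Rlt_dec (lehner_iter i x) (3/2) then 2 else 1.

Fixpoint cf_conv (a e : nat -> R) (n k : nat) : R :=
  match n with
  | O => a k
  | S n' => a k + e k / cf_conv a e n' (S k)
  end.

Definition cf_value (a e : nat -> R) (k : nat) (v : R) : Prop :=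
  Un_cv (fun n => cf_conv a e n k) v.

Fixpoint neg_eps_prod (x : R) (m : nat) : R :=
  match m with
  | O => - lehner_eps x 0
  | S m' => neg_eps_prod x m' * (- lehner_eps x (S m'))
  end.

Definition is_tail (x : R) (m : nat) (y : R) : Prop :=
  exists v, cf_value (lehner_a x) (lehner_eps x) (S m) v /\
            y = neg_eps_prod x m * v.

Definition irrational (x : R) : Prop :=
  forall p q : Z, q <> 0%Z -> x <> IZR p / IZR q.

Definition psl2z_equiv (alpha beta : R) : Prop :=
  exists a b c d : Z, (a * d - b * c = 1)%Z /\
    beta = (IZR a * alpha + IZR b) / (IZR c * alpha + IZR d).

From Stdlib Require Import Reals ZArith Lia Lra Psatz Classical.
Open Scope R_scope.

(* In the coordinate [v = x - 1] a Lehner step is inverted by the unimodular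
   nonnegative matrix [[1, 0], [1, 1]] or [[0, 1], [1, 1]], so
   [x - 1 = W_k (L^k x - 1)] for the product [W_k] of these digit matrices; large
   digits ([L^k x >= 3/2]) recur, which makes the second row of [W_k] unbounded
   and the continued fraction converge (each large digit contracts the error by
   [2/3]).  Conversely, if [z - 1 = W (y - 1)] with [W] unimodular, nonnegative and
   mapping [[0, 1]] into itself, then the Lehner orbit of [z] reaches [y] with
   matrix exactly [W] (peel one digit matrix at a time).

   If [beta = g alpha], then [beta - 1 = T W_k (alpha_k - 1)] with [T] the
   conjugate of [g] by [x |-> x - 1]; for [k] large [T W_k] is again nonnegative
   and maps [[0, 1]] into itself, because the columns of [W_k] are almost parallel
   to [(alpha - 1, 1)] while the rows of [T] pair nonnegatively with that vector.
   So the orbits of [alpha] and [beta] meet, with equal signs, and their tails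
   agree.  Finally [t_m = +-L^(m+1) x] satisfies [t_(k+1) = -1 / (t_k -+ a_k)], a
   unimodular image of [t_k], which gives the converse and the last claim. *)

(** * Integer matrices and Moebius maps *)

Record zmat := ZMat { za : Z; zb : Z; zc : Z; zd : Z }.

Definition zdet (M : zmat) : Z := (za M * zd M - zb M * zc M)%Z.

Definition zmul (M N : zmat) : zmat :=
  ZMat (za M * za N + zb M * zc N) (za M * zb N + zb M * zd N)
       (zc M * za N + zd M * zc N) (zc M * zb N + zd M * zd N).

Definition zadj (M : zmat) : zmat := ZMat (zd M) (- zb M) (- zc M) (za M).

Definition znum (M : zmat) (x : R) : R := IZR (za M) * x + IZR (zb M).
Definition zden (M : zmat) (x : R) : R := IZR (zc M) * x + IZR (zd M).
Definition mob (M : zmat) (x : R) : R := znum M x / zden M x.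

Lemma zdet_mul (M N : zmat) : zdet (zmul M N) = (zdet M * zdet N)%Z.
Proof. unfold zdet, zmul; simpl; ring. Qed.

Lemma zmul_assoc (M N P : zmat) : zmul M (zmul N P) = zmul (zmul M N) P.
Proof. destruct M, N, P; unfold zmul; simpl; f_equal; ring. Qed.

Lemma psl2z_equiv_mob (x y : R) :
  psl2z_equiv x y <-> exists g, zdet g = 1%Z /\ y = mob g x.
Proof.
  split.
  - intros (a & b & c & d & Hdet & ->). exists (ZMat a b c d). split; auto.
  - intros ([a b c d] & Hdet & ->). exists a, b, c, d. split; auto.
Qed.

Lemma Rdiv_div_common (A B D : R) : D <> 0 -> (A / D) / (B / D) = A / B.
Proof.
  intro HD. unfold Rdiv. rewrite Rinv_mult, Rinv_inv.
  replace (A * / D * (/ B * D)) with (A * / B * (D * / D)) by ring.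
  rewrite Rinv_r by exact HD. ring.
Qed.

(* The composition law holds even where the outer denominator vanishes,
   since both sides are then divisions by [0]. *)
Lemma mob_mul (M N : zmat) (x : R) :
  zden N x <> 0 -> mob M (mob N x) = mob (zmul M N) x.
Proof.
  intro HD. unfold mob.
  replace (znum M (znum N x / zden N x)) with (znum (zmul M N) x / zden N x)
    by (unfold znum, zden, zmul; simpl; rewrite !plus_IZR, !mult_IZR; field; exact HD).
  replace (zden M (znum N x / zden N x)) with (zden (zmul M N) x / zden N x)
    by (unfold znum, zden, zmul; simpl; rewrite !plus_IZR, !mult_IZR; field; exact HD).
  apply Rdiv_div_common, HD.
Qed.

Lemma mob_adj (g : zmat) (x : R) :
  zdet g <> 0%Z -> zden g x <> 0 -> mob (zadj g) (mob g x) = x.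
Proof.
  intros Hdet HD. rewrite mob_mul by exact HD.
  replace (zmul (zadj g) g) with (ZMat (zdet g) 0 0 (zdet g))
    by (destruct g; unfold zmul, zadj, zdet; simpl; f_equal; ring).
  apply not_0_IZR in Hdet. unfold mob, znum, zden; simpl. field. exact Hdet.
Qed.

Lemma zdet_adj (g : zmat) : zdet (zadj g) = zdet g.
Proof. unfold zdet, zadj; simpl; ring. Qed.

Definition int_independent (x : R) : Prop :=
  forall i j : Z, IZR i * x + IZR j = 0 -> i = 0%Z /\ j = 0%Z.

Lemma irrational_int_independent (x : R) : irrational x -> int_independent x.
Proof.
  intros Hx i j E.
  destruct (Z.eq_dec i 0) as [->|Hi].
  - split; auto. apply eq_IZR. lra.
  - exfalso. apply (Hx (- j)%Z i Hi). apply not_0_IZR in Hi.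
    apply (Rmult_eq_reg_r (IZR i)); [|exact Hi].
    unfold Rdiv. rewrite Rmult_assoc, Rinv_l, opp_IZR by exact Hi. lra.
Qed.

Lemma zden_neq0 (g : zmat) (x : R) :
  int_independent x -> zdet g <> 0%Z -> zden g x <> 0.
Proof.
  intros Hx Hdet E. destruct (Hx _ _ E) as [Hc Hd].
  apply Hdet. unfold zdet. rewrite Hc, Hd. ring.
Qed.

Lemma int_independent_mob (g : zmat) (x : R) :
  int_independent x -> zdet g <> 0%Z -> int_independent (mob g x).
Proof.
  intros Hx Hdet i j E.
  pose proof (zden_neq0 g x Hx Hdet) as HD.
  assert (Hlin : IZR (i * za g + j * zc g) * x + IZR (i * zb g + j * zd g) = 0).
  { rewrite !plus_IZR, !mult_IZR.
    replace 0 with ((IZR i * mob g x + IZR j) * zden g x) by (rewrite E; ring).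
    unfold mob, znum, zden. field. exact HD. }
  destruct (Hx _ _ Hlin) as [H1 H2].
  assert (Hi : (i * zdet g = zd g * (i * za g + j * zc g) - zc g * (i * zb g + j * zd g))%Z)
    by (unfold zdet; ring).
  assert (Hj : (j * zdet g = za g * (i * zb g + j * zd g) - zb g * (i * za g + j * zc g))%Z)
    by (unfold zdet; ring).
  rewrite H1, H2 in Hi, Hj. split; nia.
Qed.

Lemma psl2z_equiv_refl (x : R) : psl2z_equiv x x.
Proof.
  apply psl2z_equiv_mob. exists (ZMat 1 0 0 1). split; [reflexivity|].
  unfold mob, znum, zden; simpl. field.
Qed.

Lemma psl2z_equiv_sym (x y : R) :
  int_independent x -> psl2z_equiv x y -> psl2z_equiv y x.
Proof.
  intros Hx Hxy. apply psl2z_equiv_mob in Hxy as (g & Hdet & ->).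
  apply psl2z_equiv_mob. exists (zadj g). split.
  - rewrite zdet_adj. exact Hdet.
  - assert (Hdet0 : zdet g <> 0%Z) by (rewrite Hdet; discriminate).
    symmetry. apply mob_adj, zden_neq0; assumption.
Qed.

Lemma psl2z_equiv_trans (x y z : R) :
  int_independent x -> psl2z_equiv x y -> psl2z_equiv y z -> psl2z_equiv x z.
Proof.
  intros Hx Hxy Hyz.
  apply psl2z_equiv_mob in Hxy as (g & Hg & ->).
  apply psl2z_equiv_mob in Hyz as (h & Hh & ->).
  apply psl2z_equiv_mob. exists (zmul h g). split.
  - rewrite zdet_mul, Hg, Hh. reflexivity.
  - apply mob_mul, zden_neq0; [exact Hx|]. rewrite Hg. discriminate.
Qed.

Lemma psl2z_equiv_pos_den (x y : R) :
  int_independent x -> psl2z_equiv x y ->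
  exists g, zdet g = 1%Z /\ 0 < zden g x /\ y = mob g x.
Proof.
  intros Hx Hxy. apply psl2z_equiv_mob in Hxy as (g & Hdet & ->).
  assert (HD : zden g x <> 0) by (apply zden_neq0; [exact Hx | rewrite Hdet; discriminate]).
  destruct (Rlt_or_le 0 (zden g x)) as [Hpos|Hneg].
  - exists g. auto.
  - exists (ZMat (- za g) (- zb g) (- zc g) (- zd g)). revert HD Hneg.
    unfold zdet, mob, znum, zden in *; simpl. rewrite !opp_IZR. intros HD Hneg.
    repeat split; [lia | lra |]. field. split; lra.
Qed.

(** * The Lehner map and its digit matrices *)

Lemma int_independent_neq_3_2 (x : R) : int_independent x -> x <> 3/2.
Proof. intros Hx E. destruct (Hx 2%Z (-3)%Z) as [H _]; [rewrite E; simpl; lra | discriminate]. Qed.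

Lemma lehner_mob (x : R) :
  lehner x = mob (if Rlt_dec x (3/2) then ZMat 0 1 (-1) 2 else ZMat 0 1 1 (-1)) x.
Proof.
  unfold lehner, mob, znum, zden. destruct Rlt_dec; simpl;
    unfold Rdiv; rewrite Rmult_0_l, Rplus_0_l, Rmult_1_l; f_equal; ring.
Qed.

Lemma lehner_int_independent (x : R) : int_independent x -> int_independent (lehner x).
Proof.
  intro Hx. rewrite lehner_mob. apply int_independent_mob; [exact Hx|].
  destruct Rlt_dec; discriminate.
Qed.

Lemma lehner_range (x : R) : 1 < x < 2 -> x <> 3/2 -> 1 < lehner x < 2.
Proof.
  intros Hx H32. unfold lehner. destruct Rlt_dec.
  - assert (/ (2 - x) * (2 - x) = 1) by (field; lra). nra.
  - assert (/ (x - 1) * (x - 1) = 1) by (field; lra). nra.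
Qed.

Definition lehner_digit_mat (x : R) : zmat :=
  if Rlt_dec x (3/2) then ZMat 1 0 1 1 else ZMat 0 1 1 1.

Lemma lehner_digit_mat_spec (x : R) :
  1 < x < 2 -> x <> 3/2 -> x - 1 = mob (lehner_digit_mat x) (lehner x - 1).
Proof.
  intros Hx H32. unfold lehner, lehner_digit_mat, mob, znum, zden.
  destruct Rlt_dec; simpl; field; lra.
Qed.

Lemma neg_lehner_eps (x : R) (i : nat) :
  - lehner_eps x i = IZR (zdet (lehner_digit_mat (lehner_iter i x))).
Proof. unfold lehner_eps, lehner_digit_mat, zdet. destruct Rlt_dec; simpl; lra. Qed.

Lemma lehner_iter_succ_r (x : R) (k : nat) :
  lehner_iter (S k) x = lehner_iter k (lehner x).
Proof. apply Nat.iter_succ_r. Qed.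

Fixpoint orbit_mat (x : R) (k : nat) : zmat :=
  match k with
  | O => ZMat 1 0 0 1
  | S k' => zmul (orbit_mat x k') (lehner_digit_mat (lehner_iter k' x))
  end.

Definition orbit_sign (x : R) (k : nat) : Z := zdet (orbit_mat x k).

(* [orbit_sign x (S m)] is [(-eps_0)...(-eps_m)], so [signed_orbit x (S m)] is [t_m(x)]. *)
Definition signed_orbit (x : R) (k : nat) : R := IZR (orbit_sign x k) * lehner_iter k x.

Lemma orbit_mat_succ_l (x : R) (k : nat) :
  orbit_mat x (S k) = zmul (lehner_digit_mat x) (orbit_mat (lehner x) k).
Proof.
  induction k as [|k IH].
  - simpl. destruct (lehner_digit_mat x). unfold zmul; cbn [za zb zc zd]. f_equal; ring.
  - change (orbit_mat x (S (S k)))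
      with (zmul (orbit_mat x (S k)) (lehner_digit_mat (lehner_iter (S k) x))).
    rewrite IH, lehner_iter_succ_r, <- zmul_assoc. reflexivity.
Qed.

Lemma orbit_sign_succ (x : R) (k : nat) :
  orbit_sign x (S k) = (orbit_sign x k * zdet (lehner_digit_mat (lehner_iter k x)))%Z.
Proof. apply zdet_mul. Qed.

Lemma orbit_sign_pm (x : R) (k : nat) : orbit_sign x k = 1%Z \/ orbit_sign x k = (-1)%Z.
Proof.
  induction k as [|k IH]; [now left|].
  rewrite orbit_sign_succ. unfold lehner_digit_mat.
  destruct Rlt_dec, IH as [-> | ->]; simpl; auto.
Qed.

Lemma neg_eps_prod_orbit_sign (x : R) (m : nat) :
  neg_eps_prod x m = IZR (orbit_sign x (S m)).
Proof.
  induction m as [|m IH]; simpl neg_eps_prod.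
  - rewrite neg_lehner_eps, orbit_sign_succ. change (orbit_sign x 0) with 1%Z.
    rewrite Z.mul_1_l. reflexivity.
  - rewrite IH, neg_lehner_eps, (orbit_sign_succ x (S m)), mult_IZR. reflexivity.
Qed.

Lemma orbit_mat_nonneg (x : R) (k : nat) :
  (0 <= za (orbit_mat x k) /\ 0 <= zb (orbit_mat x k) /\
   0 <= zc (orbit_mat x k) /\ 1 <= zd (orbit_mat x k))%Z.
Proof.
  induction k as [|k IH]; simpl; [lia|].
  unfold lehner_digit_mat. destruct Rlt_dec; simpl; lia.
Qed.

Lemma orbit_mat_zd_le_succ (x : R) (k : nat) :
  (zd (orbit_mat x k) <= zc (orbit_mat x (S k)) /\
   zd (orbit_mat x k) <= zd (orbit_mat x (S k)))%Z.
Proof.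
  pose proof (orbit_mat_nonneg x k). simpl.
  unfold lehner_digit_mat. destruct Rlt_dec; simpl; lia.
Qed.

Lemma orbit_mat_row2_sum_ge (x : R) (k : nat) :
  (Z.of_nat k + 1 <= zc (orbit_mat x k) + zd (orbit_mat x k))%Z.
Proof.
  induction k as [|k IH]; simpl; [lia|].
  pose proof (orbit_mat_nonneg x k).
  unfold lehner_digit_mat. destruct Rlt_dec; simpl; lia.
Qed.

Lemma orbit_mat_large_digit (x : R) (k : nat) :
  3/2 <= lehner_iter k x ->
  zd (orbit_mat x (S k)) = (zc (orbit_mat x k) + zd (orbit_mat x k))%Z.
Proof.
  intro H. simpl. unfold lehner_digit_mat. destruct Rlt_dec; [lra|]. simpl. ring.
Qed.

Lemma cf_conv_lehner_range (x : R) (n k : nat) :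
  1 <= cf_conv (lehner_a x) (lehner_eps x) n k <= 2.
Proof.
  revert k. induction n as [|n IH]; intro k; simpl.
  - unfold lehner_a. destruct Rlt_dec; lra.
  - destruct (IH (S k)) as [Hlo Hhi]. set (c := cf_conv _ _ n (S k)) in *.
    assert (c * / c = 1) by (field; lra).
    unfold lehner_a, lehner_eps. destruct Rlt_dec; unfold Rdiv; nra.
Qed.

(** * The Lehner orbit of an irrational point *)

Section LehnerOrbit.

Variable x : R.
Hypothesis x_indep : int_independent x.
Hypothesis x_range : 1 < x < 2.

Local Notation X k := (lehner_iter k x).
Local Notation conv n k := (cf_conv (lehner_a x) (lehner_eps x) n k).

Lemma lehner_iter_spec (k : nat) : int_independent (X k) /\ 1 < X k < 2.
Proof.
  induction k as [|k [Hi Hr]]; [auto|].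
  change (X (S k)) with (lehner (X k)).
  pose proof (int_independent_neq_3_2 _ Hi).
  split; [apply lehner_int_independent | apply lehner_range]; assumption.
Qed.

Lemma lehner_iter_cf_step (k : nat) : X k = lehner_a x k + lehner_eps x k / X (S k).
Proof.
  destruct (lehner_iter_spec k) as [Hi Hr]. pose proof (int_independent_neq_3_2 _ Hi).
  change (X (S k)) with (lehner (X k)).
  unfold lehner_a, lehner_eps, lehner. destruct Rlt_dec; field; lra.
Qed.

(* While the digits stay small, [1 / (L^j x - 1)] drops by one at each step,
   so it would eventually become negative. *)
Lemma exists_large_digit (k : nat) : exists j, (k <= j)%nat /\ 3/2 <= X j.
Proof.
  apply NNPP. intro Hnone.
  assert (Hsmall : forall t, X (k + t) < 3/2).
  { intro t. apply Rnot_le_lt. intro H. apply Hnone. exists (k + t)%nat. split; [lia | exact H]. }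
  assert (Hdrop : forall t, / (X (k + t) - 1) = / (X k - 1) - INR t).
  { induction t as [|t IH].
    - rewrite Nat.add_0_r. simpl. ring.
    - rewrite Nat.add_succ_r, S_INR. change (X (S (k + t))) with (lehner (X (k + t))).
      destruct (lehner_iter_spec (k + t)) as [_ Hr]. specialize (Hsmall t).
      unfold lehner. destruct Rlt_dec; [|lra].
      replace (/ (X k - 1) - (INR t + 1)) with (/ (X (k + t) - 1) - 1) by lra.
      field. lra. }
  destruct (INR_unbounded (/ (X k - 1))) as [t Ht].
  destruct (lehner_iter_spec (k + t)) as [_ Hr].
  assert (0 < / (X (k + t) - 1)) by (apply Rinv_0_lt_compat; lra).
  rewrite Hdrop in *. lra.
Qed.

Lemma cf_err_succ (n k : nat) :
  Rabs (conv (S n) k - X k) <= Rabs (conv n (S k) - X (S k)) / X (S k).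
Proof.
  rewrite (lehner_iter_cf_step k).
  change (conv (S n) k) with (lehner_a x k + lehner_eps x k / conv n (S k)).
  destruct (lehner_iter_spec (S k)) as [_ Hy].
  pose proof (cf_conv_lehner_range x n (S k)) as Hc.
  set (c := conv n (S k)) in *. set (y := X (S k)) in *.
  replace (lehner_a x k + lehner_eps x k / c - (lehner_a x k + lehner_eps x k / y))
    with (lehner_eps x k * / c * ((y - c) / y)) by (field; lra).
  assert (He : Rabs (lehner_eps x k) = 1)
    by (unfold lehner_eps, Rabs; destruct Rlt_dec, Rcase_abs; lra).
  assert (Hinv : / c <= 1) by (rewrite <- Rinv_1; apply Rinv_le_contravar; lra).
  assert (0 <= Rabs (c - y) / y)
    by (apply Rmult_le_pos; [apply Rabs_pos | left; apply Rinv_0_lt_compat; lra]).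
  rewrite !Rabs_mult, He, Rabs_inv, (Rabs_pos_eq c) by lra.
  unfold Rdiv at 1. rewrite Rabs_mult, Rabs_minus_sym, Rabs_inv, (Rabs_pos_eq y) by lra.
  fold (Rabs (c - y) / y). nra.
Qed.

Lemma cf_err_add (d : nat) : forall n k,
  Rabs (conv (n + d) k - X k) <= Rabs (conv n (k + d) - X (k + d)).
Proof.
  induction d as [|d IH]; intros n k.
  - rewrite !Nat.add_0_r. lra.
  - rewrite Nat.add_succ_r. eapply Rle_trans; [apply cf_err_succ|].
    destruct (lehner_iter_spec (S k)) as [_ Hy].
    replace (k + S d)%nat with (S k + d)%nat by lia.
    pose proof (Rabs_pos (conv (n + d) (S k) - X (S k))).
    eapply Rle_trans; [|apply IH].
    apply (Rmult_le_reg_r (X (S k))); [lra|].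
    unfold Rdiv. rewrite Rmult_assoc, Rinv_l by lra. nra.
Qed.

Lemma cf_err_contract (n k d : nat) : 3/2 <= X (S (k + d)) ->
  Rabs (conv (S n + d) k - X k) <= 2/3 * Rabs (conv n (S (k + d)) - X (S (k + d))).
Proof.
  intro Hlarge. eapply Rle_trans; [apply (cf_err_add d (S n) k)|].
  eapply Rle_trans; [apply cf_err_succ|].
  pose proof (Rabs_pos (conv n (S (k + d)) - X (S (k + d)))).
  assert (/ X (S (k + d)) <= 2/3)
    by (replace (2/3) with (/ (3/2)) by field; apply Rinv_le_contravar; lra).
  unfold Rdiv. nra.
Qed.

Lemma cf_err_le_pow (M : nat) : forall k, exists N, forall n, (N <= n)%nat ->
  Rabs (conv n k - X k) <= (2/3) ^ M.
Proof.
  induction M as [|M IH]; intro k.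
  - exists 0%nat. intros n _. simpl. pose proof (cf_conv_lehner_range x n k).
    destruct (lehner_iter_spec k) as [_ Hr]. apply Rabs_le. lra.
  - destruct (exists_large_digit (S k)) as [j [Hj Hlarge]].
    replace j with (S (k + (j - S k))) in * by lia. set (d := (j - S k)%nat) in *.
    destruct (IH (S (k + d))) as [N HN]. exists (S N + d)%nat. intros n Hn.
    replace n with (S (n - S d) + d)%nat by lia.
    eapply Rle_trans; [apply cf_err_contract, Hlarge|].
    specialize (HN (n - S d)%nat ltac:(lia)).
    change ((2/3) ^ S M) with (2/3 * (2/3) ^ M). lra.
Qed.

Lemma cf_value_lehner_iter (k : nat) : cf_value (lehner_a x) (lehner_eps x) k (X k).
Proof.
  intros eps Heps.
  destruct (pow_lt_1_zero (2/3) ltac:(rewrite Rabs_pos_eq; lra) eps Heps) as [M HM].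
  destruct (cf_err_le_pow M k) as [N HN]. exists N. intros n Hn.
  unfold R_dist. eapply Rle_lt_trans; [apply HN; lia|].
  specialize (HM M (le_n _)). rewrite Rabs_pos_eq in HM; [exact HM | apply pow_le; lra].
Qed.

Lemma orbit_mat_spec (k : nat) : x - 1 = mob (orbit_mat x k) (X k - 1).
Proof.
  induction k as [|k IH].
  - unfold mob, znum, zden. simpl. field.
  - destruct (lehner_iter_spec k) as [Hi Hr]. destruct (lehner_iter_spec (S k)) as [_ Hr'].
    change (orbit_mat x (S k)) with (zmul (orbit_mat x k) (lehner_digit_mat (X k))).
    rewrite <- mob_mul.
    + change (X (S k)) with (lehner (X k)).
      rewrite <- lehner_digit_mat_spec; [exact IH | exact Hr | apply int_independent_neq_3_2, Hi].
    + unfold zden, lehner_digit_mat. destruct Rlt_dec; cbn [zc zd]; lra.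
Qed.

Lemma orbit_mat_unbounded (B : Z) :
  exists k, (B <= zc (orbit_mat x k) /\ B <= zd (orbit_mat x k))%Z.
Proof.
  destruct (exists_large_digit (Z.to_nat B)) as [j [Hj Hlarge]].
  exists (S (S j)).
  pose proof (orbit_mat_row2_sum_ge x j).
  pose proof (orbit_mat_large_digit x j Hlarge).
  pose proof (orbit_mat_zd_le_succ x (S j)).
  lia.
Qed.

(* [t_{k+1} = -1 / (t_k - sign_k a_k)] *)
Lemma signed_orbit_succ (k : nat) :
  exists g, zdet g = 1%Z /\ signed_orbit x (S k) = mob g (signed_orbit x k).
Proof.
  destruct (lehner_iter_spec k) as [_ Hr].
  unfold signed_orbit. rewrite orbit_sign_succ. change (X (S k)) with (lehner (X k)).
  unfold lehner, lehner_digit_mat. destruct Rlt_dec;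
    [exists (ZMat 0 (-1) 1 (-2 * orbit_sign x k)) | exists (ZMat 0 (-1) 1 (- orbit_sign x k))];
    (split; [unfold zdet; simpl; ring|]);
    unfold mob, znum, zden; simpl; destruct (orbit_sign_pm x k) as [-> | ->]; simpl;
    field; lra.
Qed.

Lemma signed_orbit_psl2z (k : nat) : psl2z_equiv x (signed_orbit x k).
Proof.
  induction k as [|k IH].
  - unfold signed_orbit. simpl. rewrite Rmult_1_l. apply psl2z_equiv_refl.
  - destruct (signed_orbit_succ k) as (g & Hg & E).
    apply (psl2z_equiv_trans x (signed_orbit x k)); [exact x_indep | exact IH |].
    apply psl2z_equiv_mob. exists g. auto.
Qed.

Lemma is_tail_iff (m : nat) (y : R) : is_tail x m y <-> y = signed_orbit x (S m).
Proof.
  unfold is_tail, signed_orbit. split.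
  - intros (v & Hv & ->). rewrite neg_eps_prod_orbit_sign. f_equal.
    eapply UL_sequence; [exact Hv | apply cf_value_lehner_iter].
  - intros ->. exists (X (S m)). rewrite neg_eps_prod_orbit_sign.
    split; [apply cf_value_lehner_iter | reflexivity].
Qed.

End LehnerOrbit.

(** * Reaching a point along its Lehner orbit *)

(* Nonnegative entries, with [mob W 0] and [mob W 1] in [[0, 1]]. *)
Definition maps_unit_interval (W : zmat) : Prop :=
  (0 <= za W /\ 0 <= zb W /\ 0 <= zc W /\ 0 <= zd W /\
   zb W <= zd W /\ za W + zb W <= zc W + zd W)%Z.

Definition zsize (W : zmat) : Z := (za W + zb W + zc W + zd W)%Z.

(* Either [mob W] maps [[0, 1]] into [[0, 1/2]] or into [[1/2, 1]]. *)
Lemma maps_unit_interval_halves (W : zmat) :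
  maps_unit_interval W -> (zdet W = 1 \/ zdet W = -1)%Z -> W <> ZMat 1 0 0 1 ->
  (za W <= zc W)%Z /\
  ((2 * zb W <= zd W /\ 2 * (za W + zb W) <= zc W + zd W) \/
   (zd W <= 2 * zb W /\ zc W + zd W <= 2 * (za W + zb W)))%Z.
Proof.
  destruct W as [p q r s]. unfold maps_unit_interval, zdet. cbn [za zb zc zd].
  intros HW Hdet Hne.
  assert (~ (p = 1 /\ q = 0 /\ r = 0 /\ s = 1)%Z)
    by (intros (-> & -> & -> & ->); apply Hne; reflexivity).
  split; [nia|].
  assert (((r + s) * (s - 2 * q) + s * (2 * (p + q) - (r + s)) = 2 * (p * s - q * r))%Z)
    by ring.
  destruct (Z.lt_total s (2 * q)) as [H1|[H1|H1]];
    destruct (Z.lt_total (r + s) (2 * (p + q))) as [H2|[H2|H2]];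
    try (left; lia); try (right; lia); exfalso; nia.
Qed.

Lemma lehner_sub1_small (z N D : R) :
  0 <= N -> 2 * N < D -> z - 1 = N / D -> z < 3/2 /\ lehner z - 1 = N / (D - N).
Proof.
  intros HN Hlt Hz.
  assert (Hz' : z = 1 + N / D) by lra. rewrite Hz'.
  assert (Hsmall : N / D < 1/2).
  { apply (Rmult_lt_reg_r D); [lra|]. replace (N / D * D) with N by (field; lra). lra. }
  split; [lra|]. unfold lehner. destruct Rlt_dec; [field; lra | lra].
Qed.

Lemma lehner_sub1_large (z N D : R) :
  0 < D -> D < 2 * N -> z - 1 = N / D -> 3/2 < z /\ lehner z - 1 = (D - N) / N.
Proof.
  intros HD Hgt Hz.
  assert (Hz' : z = 1 + N / D) by lra. rewrite Hz'.
  assert (Hlarge : 1/2 < N / D).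
  { apply (Rmult_lt_reg_r D); [lra|]. replace (N / D * D) with N by (field; lra). lra. }
  split; [lra|]. unfold lehner. destruct Rlt_dec; [lra | field; lra].
Qed.

Lemma lehner_descent_step (W : zmat) (v z : R) :
  maps_unit_interval W -> (zdet W = 1 \/ zdet W = -1)%Z -> W <> ZMat 1 0 0 1 ->
  0 < v < 1 -> 2 * znum W v <> zden W v -> z - 1 = mob W v ->
  exists W1, maps_unit_interval W1 /\ (zdet W1 = 1 \/ zdet W1 = -1)%Z /\
    (zsize W1 < zsize W)%Z /\
    W = zmul (lehner_digit_mat z) W1 /\ lehner z - 1 = mob W1 v.
Proof.
  intros HW Hdet Hne Hv Hmid Hz.
  destruct (maps_unit_interval_halves W HW Hdet Hne) as [Hpr Hhalf].
  destruct W as [p q r s].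
  unfold maps_unit_interval, zdet, zsize, mob, znum, zden in *. cbn [za zb zc zd] in *.
  assert (Hpq : (1 <= p + q)%Z) by nia.
  assert (0 <= IZR p /\ 0 <= IZR q /\ 0 <= IZR r /\ 0 <= IZR s /\ 1 <= IZR r + IZR s)
    by (repeat split; rewrite <- ?plus_IZR; apply IZR_le; nia).
  set (N := IZR p * v + IZR q) in *. set (D := IZR r * v + IZR s) in *.
  assert (HD : 0 < D) by (unfold D; nra).
  assert (HN : 0 <= N) by (unfold N; nra).
  (* [2 N - D] interpolates linearly between its values at [v = 0] and [v = 1] *)
  assert (Hcomb : 2 * N - D = (1 - v) * IZR (2 * q - s) + v * IZR (2 * (p + q) - (r + s)))
    by (unfold N, D; rewrite !minus_IZR, !mult_IZR, !plus_IZR; ring).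
  destruct Hhalf as [[H1 H2] | [H1 H2]];
    pose proof (IZR_le _ _ H1) as H1R; pose proof (IZR_le _ _ H2) as H2R;
    rewrite !minus_IZR, !mult_IZR, !plus_IZR in Hcomb;
    rewrite mult_IZR in H1R; rewrite mult_IZR, !plus_IZR in H2R.
  - assert (Hle : 2 * N <= D) by nra.
    destruct (Rle_lt_or_eq _ _ Hle) as [Hlt | E]; [|contradiction].
    destruct (lehner_sub1_small z N D HN Hlt Hz) as [Hz32 Hl].
    exists (ZMat p q (r - p) (s - q)). cbn [za zb zc zd].
    repeat split; try lia; try ring.
    + unfold lehner_digit_mat. destruct Rlt_dec; [|lra].
      unfold zmul; cbn [za zb zc zd]. f_equal; ring.
    + rewrite Hl, !minus_IZR. unfold N, D. f_equal. ring.
  - assert (Hle : D <= 2 * N) by nra.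
    destruct (Rle_lt_or_eq _ _ Hle) as [Hgt | E]; [|symmetry in E; contradiction].
    destruct (lehner_sub1_large z N D HD Hgt Hz) as [Hz32 Hl].
    exists (ZMat (r - p) (s - q) p q). cbn [za zb zc zd].
    repeat split; try lia; try ring.
    + unfold lehner_digit_mat. destruct Rlt_dec; [lra|].
      unfold zmul; cbn [za zb zc zd]. f_equal; ring.
    + rewrite Hl, !minus_IZR. unfold N, D. f_equal. ring.
Qed.

Lemma lehner_descent (y : R) : int_independent y -> 1 < y < 2 ->
  forall W z, maps_unit_interval W -> (zdet W = 1 \/ zdet W = -1)%Z ->
  z - 1 = mob W (y - 1) -> exists n, lehner_iter n z = y /\ orbit_mat z n = W.
Proof.
  intros Hy Hyr W.
  induction W as [W IH]
    using (well_founded_induction (Wf_nat.well_founded_ltof _ (fun W => Z.to_nat (zsize W)))).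
  intros z HW Hdet Hz.
  destruct (classic (W = ZMat 1 0 0 1)) as [-> | Hne].
  - exists 0%nat. split; [|reflexivity].
    replace (mob (ZMat 1 0 0 1) (y - 1)) with (y - 1) in Hz
      by (unfold mob, znum, zden; simpl; field).
    simpl. lra.
  - assert (Hmid : 2 * znum W (y - 1) <> zden W (y - 1)).
    { intro E. unfold znum, zden in E.
      destruct (Hy (2 * za W - zc W) (2 * zb W - zd W - (2 * za W - zc W)))%Z as [H1 H2].
      - rewrite !minus_IZR, !mult_IZR. lra.
      - destruct W as [p q r s]. unfold zdet in Hdet. cbn [za zb zc zd] in *.
        assert (r = 2 * p)%Z by lia. assert (s = 2 * q)%Z by lia. subst r s.
        replace (p * (2 * q) - q * (2 * p))%Z with 0%Z in Hdet by ring. lia. }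
    destruct (lehner_descent_step W (y - 1) z HW Hdet Hne ltac:(lra) Hmid Hz)
      as (W1 & HW1 & Hdet1 & Hsize & HWeq & Hz1).
    destruct (IH W1 ltac:(unfold ltof, zsize, maps_unit_interval in *; lia) (lehner z) HW1 Hdet1 Hz1)
      as (n & Hn & Hmat).
    exists (S n). rewrite lehner_iter_succ_r, orbit_mat_succ_l, Hmat. auto.
Qed.

(** * Equivalent points have meeting orbits *)

(* The action of [g] in the coordinate [x - 1]. *)
Definition shift_conj (g : zmat) : zmat :=
  ZMat (za g - zc g) (za g + zb g - zc g - zd g) (zc g) (zc g + zd g).

Lemma zdet_shift_conj (g : zmat) : zdet (shift_conj g) = zdet g.
Proof. unfold zdet, shift_conj; simpl; ring. Qed.

Lemma znum_shift_conj (g : zmat) (x : R) :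
  znum (shift_conj g) (x - 1) = znum g x - zden g x.
Proof. unfold znum, zden, shift_conj; cbn [za zb zc zd]. rewrite !minus_IZR, !plus_IZR. ring. Qed.

Lemma zden_shift_conj (g : zmat) (x : R) : zden (shift_conj g) (x - 1) = zden g x.
Proof. unfold zden, shift_conj; cbn [zc zd]. rewrite plus_IZR. ring. Qed.

(* [m p + n r = r (m u + n) + m (p - u r)], and the last term lies in [(-1, 1)]. *)
Lemma int_pairing_nonneg (m n p r : Z) (u E : R) :
  0 <= IZR m * u + IZR n -> (0 <= r)%Z -> IZR (Z.abs m) < E ->
  Rabs (IZR p - u * IZR r) * E <= 1 -> (0 <= m * p + n * r)%Z.
Proof.
  intros Hrow Hr Hm Herr.
  set (e := IZR p - u * IZR r) in *.
  assert (Hsplit : IZR (m * p + n * r) = IZR r * (IZR m * u + IZR n) + IZR m * e)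
    by (unfold e; rewrite plus_IZR, !mult_IZR; ring).
  assert (Hsmall : Rabs (IZR m * e) < 1).
  { rewrite Rabs_mult, <- abs_IZR.
    pose proof (IZR_le _ _ (Z.abs_nonneg m)).
    destruct (Rle_lt_or_eq _ _ (Rabs_pos e)) as [He | He]; [nra | rewrite <- He; lra]. }
  apply IZR_le in Hr.
  assert (Hgt : IZR (-1) < IZR (m * p + n * r)).
  { rewrite Hsplit. apply Rabs_def2 in Hsmall. simpl. nra. }
  apply lt_IZR in Hgt. lia.
Qed.

Lemma Rabs_unit_div_mul (d : Z) (E : R) :
  (d = 1 \/ d = -1)%Z -> 0 < E -> Rabs (IZR d / E) * E = 1.
Proof.
  intros Hd HE. unfold Rdiv.
  rewrite Rabs_mult, Rabs_inv, (Rabs_pos_eq E), <- abs_IZR by lra.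
  replace (Z.abs d) with 1%Z by (destruct Hd; subst; reflexivity).
  field. lra.
Qed.

Lemma mob_column_errors (W : zmat) (v : R) :
  0 < v < 1 -> 0 < zden W v -> (zdet W = 1 \/ zdet W = -1)%Z ->
  Rabs (IZR (za W) - mob W v * IZR (zc W)) * zden W v = 1 /\
  Rabs (IZR (zb W) - mob W v * IZR (zd W)) * (zden W v / v) = 1 /\
  Rabs (IZR (za W + zb W) - mob W v * IZR (zc W + zd W)) * (zden W v / (1 - v)) = 1.
Proof.
  intros Hv HD Hdet.
  replace (IZR (za W) - mob W v * IZR (zc W)) with (IZR (zdet W) / zden W v)
    by (unfold mob, znum, zden, zdet in *; rewrite minus_IZR, !mult_IZR; field; lra).
  replace (IZR (zb W) - mob W v * IZR (zd W)) with (IZR (- zdet W) / (zden W v / v))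
    by (unfold mob, znum, zden, zdet in *; rewrite opp_IZR, minus_IZR, !mult_IZR; field; lra).
  replace (IZR (za W + zb W) - mob W v * IZR (zc W + zd W))
    with (IZR (zdet W) / (zden W v / (1 - v)))
    by (unfold mob, znum, zden, zdet in *; rewrite minus_IZR, !plus_IZR, !mult_IZR; field; lra).
  repeat split; apply Rabs_unit_div_mul; try lia; try apply Rdiv_lt_0_compat; lra.
Qed.

Definition first_col_bound (T : zmat) : Z := (Z.abs (za T) + Z.abs (zc T) + Z.abs (zc T - za T))%Z.

(* Each entry of [T W], and each difference in [maps_unit_interval], pairs a row
   of [T] (nonnegative at [(u, 1)]) with a column of [W] (almost parallel to it). *)
Lemma zmul_maps_unit_interval (T W : zmat) (v : R) :
  0 < v < 1 -> (zdet W = 1 \/ zdet W = -1)%Z -> (0 <= za W)%Z -> (0 <= zb W)%Z ->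
  (first_col_bound T < zc W)%Z -> (first_col_bound T < zd W)%Z ->
  0 <= znum T (mob W v) <= zden T (mob W v) ->
  maps_unit_interval (zmul T W).
Proof.
  intros Hv Hdet Hp Hq Hbound_c Hbound_d Hrows.
  assert (HD : 0 < zden W v).
  { unfold zden, first_col_bound in *.
    assert (0 < IZR (zc W) /\ 0 < IZR (zd W)) as [] by (split; apply IZR_lt; lia). nra. }
  destruct (mob_column_errors W v Hv HD Hdet) as (E1 & E2 & E3).
  set (u := mob W v) in *. set (D := zden W v) in *.
  destruct T as [m1 n1 m2 n2], W as [p q r s].
  unfold maps_unit_interval, zmul, znum, zden, first_col_bound in *. cbn [za zb zc zd] in *.
  assert (Hcols : IZR r <= D / v /\ IZR s <= D /\ IZR s <= D / (1 - v)).
  { assert (0 <= IZR r /\ 0 <= IZR s) as [] by (split; apply IZR_le; lia).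
    unfold D. repeat split.
    - apply (Rmult_le_reg_r v); [lra|]. unfold Rdiv. rewrite Rmult_assoc, Rinv_l by lra. nra.
    - nra.
    - apply (Rmult_le_reg_r (1 - v)); [lra|].
      unfold Rdiv. rewrite Rmult_assoc, Rinv_l by lra. nra. }
  destruct Hcols as (Hr_col2 & Hs_col1 & Hs_col3).
  assert (Habs : forall m : Z, (Z.abs m < r)%Z -> (Z.abs m < s)%Z ->
                   IZR (Z.abs m) < D /\ IZR (Z.abs m) < D / v /\ IZR (Z.abs m) < D / (1 - v)).
  { intros m Hmr Hms. apply IZR_lt in Hmr, Hms. lra. }
  destruct (Habs m1) as (A1 & B1 & _); [lia | lia |].
  destruct (Habs m2) as (A2 & B2 & _); [lia | lia |].
  destruct (Habs (m2 - m1)%Z) as (_ & B3 & C3); [lia | lia |].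
  assert (R1 : 0 <= IZR m1 * u + IZR n1) by lra.
  assert (R2 : 0 <= IZR m2 * u + IZR n2) by lra.
  assert (R3 : 0 <= IZR (m2 - m1) * u + IZR (n2 - n1)) by (rewrite !minus_IZR; lra).
  pose proof (int_pairing_nonneg m1 n1 p r u D R1 ltac:(lia) A1 ltac:(lra)).
  pose proof (int_pairing_nonneg m1 n1 q s u (D / v) R1 ltac:(lia) B1 ltac:(lra)).
  pose proof (int_pairing_nonneg m2 n2 p r u D R2 ltac:(lia) A2 ltac:(lra)).
  pose proof (int_pairing_nonneg m2 n2 q s u (D / v) R2 ltac:(lia) B2 ltac:(lra)).
  pose proof (int_pairing_nonneg (m2 - m1) (n2 - n1) q s u (D / v) R3 ltac:(lia) B3 ltac:(lra)).
  pose proof (int_pairing_nonneg (m2 - m1) (n2 - n1) (p + q) (r + s) u (D / (1 - v))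
                R3 ltac:(lia) C3 ltac:(lra)).
  repeat split; nia.
Qed.

Lemma psl2z_equiv_orbits_meet (alpha beta : R) :
  int_independent alpha -> 1 < alpha < 2 -> 1 < beta < 2 -> psl2z_equiv alpha beta ->
  exists k n, lehner_iter n beta = lehner_iter k alpha /\ orbit_sign beta n = orbit_sign alpha k.
Proof.
  intros Ha Har Hbr Heq.
  destruct (psl2z_equiv_pos_den alpha beta Ha Heq) as (g & Hg & Hden & ->).
  set (T := shift_conj g).
  destruct (orbit_mat_unbounded alpha Ha Har (first_col_bound T + 1)) as [k Hk].
  destruct (lehner_iter_spec alpha Ha Har k) as [Hy Hyr].
  pose proof (orbit_mat_spec alpha Ha Har k) as Hu.
  pose proof (orbit_mat_nonneg alpha k) as HWpos.
  pose proof (orbit_sign_pm alpha k) as HdetW. unfold orbit_sign in HdetW.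
  set (W := orbit_mat alpha k) in *. set (v := lehner_iter k alpha - 1) in *.
  assert (HTden : zden T (alpha - 1) = zden g alpha) by apply zden_shift_conj.
  assert (HTnum : znum T (alpha - 1) = znum g alpha - zden g alpha) by apply znum_shift_conj.
  assert (Hbeta : mob g alpha - 1 = mob (zmul T W) v).
  { rewrite <- mob_mul, <- Hu.
    - unfold mob. rewrite HTnum, HTden. field. lra.
    - unfold zden. assert (0 <= IZR (zc W) /\ 1 <= IZR (zd W)) as []
        by (split; apply IZR_le; lia). unfold v. nra. }
  assert (HTW : maps_unit_interval (zmul T W)).
  { apply zmul_maps_unit_interval with v; try lia; [unfold v; lra|].
    rewrite <- Hu, HTnum, HTden.
    assert (znum g alpha = mob g alpha * zden g alpha) by (unfold mob; field; lra). nra. }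
  assert (HdetTW : zdet (zmul T W) = zdet W) by (rewrite zdet_mul; unfold T;
    rewrite zdet_shift_conj, Hg; ring).
  destruct (lehner_descent _ Hy Hyr (zmul T W) (mob g alpha) HTW
              ltac:(rewrite HdetTW; exact HdetW) Hbeta) as (n & Hn & Hmat).
  exists k, n. split; [exact Hn|]. unfold orbit_sign. rewrite Hmat. exact HdetTW.
Qed.

Lemma orbit_sync (alpha beta : R) (k n : nat) :
  lehner_iter n beta = lehner_iter k alpha -> orbit_sign beta n = orbit_sign alpha k ->
  forall j, signed_orbit beta (n + j) = signed_orbit alpha (k + j).
Proof.
  intros HX Hs.
  assert (Hsync : forall j, lehner_iter (n + j) beta = lehner_iter (k + j) alpha /\
                            orbit_sign beta (n + j) = orbit_sign alpha (k + j)).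
  { induction j as [|j [EX ES]]; [rewrite !Nat.add_0_r; auto|].
    rewrite !Nat.add_succ_r, !orbit_sign_succ, EX, ES. split; [|reflexivity].
    change (lehner (lehner_iter (n + j) beta) = lehner (lehner_iter (k + j) alpha)).
    rewrite EX. reflexivity. }
  intro j. unfold signed_orbit. destruct (Hsync j) as [-> ->]. reflexivity.
Qed.

Theorem proposition6p3 (alpha beta : R) :
  irrational alpha -> irrational beta ->
  1 < alpha < 2 -> 1 < beta < 2 ->
  (psl2z_equiv alpha beta <->
     exists (r s : nat) (y : R), (0 < r)%nat /\ (0 < s)%nat /\
       is_tail alpha r y /\ is_tail beta s y) /\
  (forall m : nat, exists y : R, is_tail alpha m y /\ psl2z_equiv alpha y).
Proof.
  intros Ia Ib Har Hbr.
  apply irrational_int_independent in Ia, Ib.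
  split; [split|].
  - intro Heq.
    destruct (psl2z_equiv_orbits_meet alpha beta Ia Har Hbr Heq) as (k & n & HX & Hs).
    exists (S k), (S n), (signed_orbit alpha (k + 2)).
    rewrite !is_tail_iff by assumption.
    replace (S (S k)) with (k + 2)%nat by lia. replace (S (S n)) with (n + 2)%nat by lia.
    repeat split; try lia. symmetry. apply orbit_sync; assumption.
  - intros (r & s & y & _ & _ & Ta & Tb).
    apply is_tail_iff in Ta, Tb; try assumption.
    apply (psl2z_equiv_trans alpha y beta Ia).
    + rewrite Ta. apply signed_orbit_psl2z; assumption.
    + apply psl2z_equiv_sym; [exact Ib|]. rewrite Tb. apply signed_orbit_psl2z; assumption.
  - intro m. exists (signed_orbit alpha (S m)).
    rewrite is_tail_iff by assumption. split; [reflexivity|].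
    apply signed_orbit_psl2z; assumption.
Qed.
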